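(* Assume the hypotheses: $U_e=U_f=U\ge0$, $\beta<-2$, $\kappa_g\ge16$, $\alpha\le2\min\{\beta,-3\}-1$, deterministic source $g$, and a realization of the static velocity with $|V_k|,|W_k|\le\Xi$. Let $\varpi$ be as defined below and suppose $\varepsilon:=4U\Xi\varpi<1$. Then the iterates $\theta^{(0)}=-\Delta^{-1}g$, $\theta^{(n+1)}=\Delta^{-1}(u\cdot\nabla\theta^{(n)}-g)$ converge mode-wise to a limit $\theta^{(\infty)}$, and there is a constant $c_1$ depending only on $(\gamma_k)$, $c_g$, $\kappa_g$, $\alpha$, $\beta$ (times $U\Xi$) such that for all $k\neq0$ $$|\theta^{(1)}_k-\theta^{(\infty)}_k|\le c_1\,\varepsilon\,|k|^{-2}K_\beta(|k|).$$
   Context: Setting: $D=[0,2\pi]^3$ periodic; mean-zero functions $f=\sum_{k\in\mathbb Z^3\setminus\{0\}}f_ke^{ik\cdot x}$; $(\Delta^{-1}f)_k=-|k|^{-2}f_k$. Craya–Herring basis: for $k=(k_x,k_y,k_z)$ with $|k_h|:=\sqrt{k_x^2+k_y^2}>0$, $e_k=(k_y,-k_x,0)/|k_h|$, $f_k=(k_xk_z,k_yk_z,-|k_h|^2)/(|k||k_h|)$; for $k\ne0$ on the $z$-axis, a fixed orthonormal pair orthogonal to $k$. Source: $\Delta^{-1}g=\sum_{k\ne0}\gamma_ke^{ik\cdot x}$ with $\gamma_{-k}=\overline{\gamma_k}$, constants $c_g\ge0$, $\kappa_g>1$, $\alpha<0$, $|\gamma_k|\le c_g|k|^\alpha$ for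 $|k|\ge\kappa_g$. Velocity: $u(x)=\sum_{k\ne0}|k|^\beta U[e_kV_k+f_kW_k]e^{ik\cdot x}$ with complex $V_k,W_k$, $V_{-k}=\overline{V_k}$, $W_{-k}=\overline{W_k}$, $|V_k|,|W_k|\le\Xi$. $K_\beta(s):=\min\{1,(s/(2\kappa_g))^\beta\}$; $\varpi:=\sup_{k\neq0}K_\beta(|k|)^{-1}\sum_{j\notin\{0,k\}}|k-j|^\beta|j|^{-1}K_\beta(|j|)$ (finite since $\beta<-2$). *)

From Stdlib Require Import Reals List ZArith.
From Coquelicot Require Import Coquelicot.
Open Scope R_scope.

Definition Z3 : Type := (Z * Z * Z)%type.
Definition kx (k : Z3) : R := let '(a, _, _) := k in IZR a.
Definition ky (k : Z3) : R := let '(_, b, _) := k in IZR b.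
Definition kz (k : Z3) : R := let '(_, _, c) := k in IZR c.
Definition Z3zero : Z3 := (0%Z, 0%Z, 0%Z).
Definition Z3sub (k j : Z3) : Z3 :=
  let '(a, b, c) := k in let '(a', b', c') := j in ((a - a')%Z, (b - b')%Z, (c - c')%Z).
Definition Z3opp (k : Z3) : Z3 := let '(a, b, c) := k in ((- a)%Z, (- b)%Z, (- c)%Z).
Definition Z3eqb (k j : Z3) : bool :=
  let '(a, b, c) := k in let '(a', b', c') := j in
  (Z.eqb a a' && Z.eqb b b' && Z.eqb c c')%bool.
Definition on_zaxis (k : Z3) : bool := let '(a, b, _) := k in (Z.eqb a 0 && Z.eqb b 0)%bool.

Definition knorm (k : Z3) : R := sqrt (kx k ^ 2 + ky k ^ 2 + kz k ^ 2).
Definition khnorm (k : Z3) : R := sqrt (kx k ^ 2 + ky k ^ 2).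

Definition R3 : Type := (R * R * R)%type.
Definition C3 : Type := (C * C * C)%type.
Definition dotR3 (v w : R3) : R :=
  let '(a, b, c) := v in let '(a', b', c') := w in a * a' + b * b' + c * c'.
Definition Z3toR3 (k : Z3) : R3 := (kx k, ky k, kz k).

(** Craya--Herring basis; e0, f0 give the fixed orthonormal pair used for
    modes on the z-axis. *)
Definition CH_e (e0 : Z3 -> R3) (k : Z3) : R3 :=
  if on_zaxis k then e0 k
  else (ky k / khnorm k, - kx k / khnorm k, 0).
Definition CH_f (f0 : Z3 -> R3) (k : Z3) : R3 :=
  if on_zaxis k then f0 k
  else (kx k * kz k / (knorm k * khnorm k),
        ky k * kz k / (knorm k * khnorm k),
        - (khnorm k ^ 2) / (knorm k * khnorm k)).

(** Fourier coefficient of the velocity: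
    u_k = |k|^beta U (e_k V_k + f_k W_k). *)
Definition vel (U beta : R) (e0 f0 : Z3 -> R3) (V W : Z3 -> C) (k : Z3) : C3 :=
  let s := RtoC (Rpower (knorm k) beta * U) in
  let '(e1, e2, e3) := CH_e e0 k in
  let '(f1, f2, f3) := CH_f f0 k in
  (s * (RtoC e1 * V k + RtoC f1 * W k),
   s * (RtoC e2 * V k + RtoC f2 * W k),
   s * (RtoC e3 * V k + RtoC f3 * W k))%C.

(** j . w  for j in Z^3 and a complex vector w (no conjugation). *)
Definition dotZC (j : Z3) (w : C3) : C :=
  let '(w1, w2, w3) := w in (RtoC (kx j) * w1 + RtoC (ky j) * w2 + RtoC (kz j) * w3)%C.

Definition Ci : C := (0, 1).

(** Summation over Z^3 via symmetric cube partial sums over [-N,N]^3. *)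
Definition Zrange (N : nat) : list Z :=
  map (fun i => (Z.of_nat i - Z.of_nat N)%Z) (seq 0 (2 * N + 1)).
Definition cube (N : nat) : list Z3 :=
  flat_map (fun a => flat_map (fun b => map (fun c => (a, b, c)) (Zrange N)) (Zrange N))
           (Zrange N).
Definition psumC (f : Z3 -> C) (N : nat) : C := fold_right (fun j acc => (f j + acc)%C) (RtoC 0) (cube N).
Definition psumR (f : Z3 -> R) (N : nat) : R := fold_right (fun j acc => f j + acc) 0 (cube N).
Definition Zseries_conv (f : Z3 -> C) : Prop :=
  ex_finite_lim_seq (fun N => Re (psumC f N)) /\ ex_finite_lim_seq (fun N => Im (psumC f N)).
Definition Zsum (f : Z3 -> C) : C :=
  (real (Lim_seq (fun N => Re (psumC f N))), real (Lim_seq (fun N => Im (psumC f N)))).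

(** Fourier coefficient of u . grad theta at mode k:
    (u.grad theta)_k = sum_{j notin {0,k}} (u_{k-j} . i j) theta_j. *)
Definition adv_term (u : Z3 -> C3) (theta : Z3 -> C) (k : Z3) (j : Z3) : C :=
  if (Z3eqb j Z3zero || Z3eqb j k)%bool then RtoC 0
  else (Ci * dotZC j (u (Z3sub k j)) * theta j)%C.
Definition adv (u : Z3 -> C3) (theta : Z3 -> C) (k : Z3) : C := Zsum (adv_term u theta k).

(** Iterates: theta^(0) = -Delta^{-1} g, theta^(n+1) = Delta^{-1}(u.grad theta^(n) - g),
    with (Delta^{-1} h)_k = -|k|^{-2} h_k and (Delta^{-1} g)_k = gamma_k. *)
Fixpoint iterate (u : Z3 -> C3) (gamma : Z3 -> C) (n : nat) : Z3 -> C :=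
  match n with
  | O => fun k => (- gamma k)%C
  | S m => fun k => (RtoC (- / (knorm k ^ 2)) * adv u (iterate u gamma m) k - gamma k)%C
  end.

Definition Kbeta (kappa beta s : R) : R := Rmin 1 (Rpower (s / (2 * kappa)) beta).

(** varpi = sup_{k<>0} K_beta(|k|)^{-1} sum_{j notin {0,k}} |k-j|^beta |j|^{-1} K_beta(|j|),
    written as the sup over k <> 0 and N of the (nonnegative) cube partial sums. *)
Definition varpi_term (kappa beta : R) (k j : Z3) : R :=
  if (Z3eqb j Z3zero || Z3eqb j k)%bool then 0
  else Rpower (knorm (Z3sub k j)) beta * / knorm j * Kbeta kappa beta (knorm j).
Definition varpi (kappa beta : R) : Rbar :=
  Lub_Rbar (fun x => exists (k : Z3) (N : nat), k <> Z3zero /\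
     x = / Kbeta kappa beta (knorm k) * psumR (varpi_term kappa beta k) N).

(* Write w(k) = |k|^-2 K_beta(|k|).  The decay of the source gives |gamma_k| <= C0 w(k) for some
   C0 (finitely many small modes, and alpha <= beta - 2 for the others).  Since
   |j . u_m| <= 2 U Xi |m|^beta |j|, a bound |theta_j| <= B w(j) makes the series for
   (u . grad theta)_k absolutely convergent, dominated by
   B 2 U Xi sum_j |k - j|^beta |j|^-1 K_beta(|j|) <= B rho K_beta(|k|),  rho = 2 U Xi varpi < 1/2;
   so theta |-> Delta^-1 (u . grad theta) maps the weighted bound B to B rho.  This map is linear,
   hence the increments satisfy |theta^(n+1) - theta^(n)| <= C0 rho^(n+1) w, the iterates converge
   geometrically, and |theta^(1) - theta^(oo)| <= C0 rho^2 w / (1 - rho) <= 2 C0 rho^2 w,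
   which is (2 C0 varpi) U Xi eps w. *)

From Pilot Require Import Defs.
From Stdlib Require Import Reals List ZArith.
From Coquelicot Require Import Coquelicot.
From Stdlib Require Import Lra Lia FunctionalExtensionality.
Open Scope R_scope.

Lemma ex_finite_lim_seq_modulus (u e : nat -> R) :
  (forall n m, (n <= m)%nat -> Rabs (u m - u n) <= e n) -> is_lim_seq e 0 ->
  ex_finite_lim_seq u.
Proof.
  intros Hu He. apply ex_lim_seq_cauchy_corr. intros eps.
  apply is_lim_seq_spec in He. destruct (He eps) as [N HN].
  exists N. intros n m Hn Hm.
  destruct (Nat.le_ge_cases n m) as [Hnm|Hmn].
  - specialize (HN n Hn). rewrite Rminus_0_r in HN.
    rewrite Rabs_minus_sym. pose proof (Hu n m Hnm). pose proof (Rle_abs (e n)). lra.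
  - specialize (HN m Hm). rewrite Rminus_0_r in HN.
    pose proof (Hu m n Hmn). pose proof (Rle_abs (e m)). lra.
Qed.

Lemma ex_finite_lim_seq_dominated (h g : nat -> R) :
  (forall n m, (n <= m)%nat -> Rabs (h m - h n) <= g m - g n) -> ex_finite_lim_seq g ->
  ex_finite_lim_seq h.
Proof.
  intros Hh [G HG].
  apply (ex_finite_lim_seq_modulus h (fun n => G - g n)).
  - intros n m Hnm. eapply Rle_trans; [apply Hh; exact Hnm|].
    enough (g m <= G) by lra.
    apply (is_lim_seq_incr_compare g G HG). intro k.
    pose proof (Hh k (S k) (Nat.le_succ_diag_r k)). pose proof (Rabs_pos (h (S k) - h k)). lra.
  - replace 0 with (G - G) by ring.
    apply is_lim_seq_minus'; [apply is_lim_seq_const|exact HG].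
Qed.

(* [Zseries_conv f] and [Zsum f] are, by conversion, [Ccvg (psumC f)] and [Clim (psumC f)]. *)
Definition Ccvg (z : nat -> C) : Prop :=
  ex_finite_lim_seq (fun n => Re (z n)) /\ ex_finite_lim_seq (fun n => Im (z n)).
Definition Clim (z : nat -> C) : C :=
  (real (Lim_seq (fun n => Re (z n))), real (Lim_seq (fun n => Im (z n)))).

Lemma Ccvg_is_lim (z : nat -> C) : Ccvg z ->
  is_lim_seq (fun n => Re (z n)) (Re (Clim z)) /\ is_lim_seq (fun n => Im (z n)) (Im (Clim z)).
Proof. intros [Hre Him]. split; apply Lim_seq_correct'; assumption. Qed.

Lemma Im_le_Cmod (c : C) : Rabs (Im c) <= Cmod c.
Proof.
  rewrite <- (Rabs_pos_eq (Cmod c)) by apply Cmod_ge_0.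
  apply Rsqr_le_abs_0. unfold Rsqr. pose proof (Cmod2_alt c). pose proof (pow2_ge_0 (Re c)). nra.
Qed.

Lemma Ccvg_modulus (z : nat -> C) (e : nat -> R) :
  (forall n m, (n <= m)%nat -> Cmod (z m - z n)%C <= e n) -> is_lim_seq e 0 -> Ccvg z.
Proof.
  intros Hz He. split; apply (ex_finite_lim_seq_modulus _ e); auto; intros n m Hnm.
  - change (Re (z m) - Re (z n)) with (Re (z m - z n)).
    eapply Rle_trans; [apply re_le_Cmod|auto].
  - change (Im (z m) - Im (z n)) with (Im (z m - z n)).
    eapply Rle_trans; [apply Im_le_Cmod|auto].
Qed.

Lemma Cmod_le_lim (a b : nat -> R) (x y T : R) : is_lim_seq a x -> is_lim_seq b y ->
  (forall n, Cmod (a n, b n) <= T) -> Cmod (x, y) <= T.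
Proof.
  intros Ha Hb H.
  assert (HT : 0 <= T) by (eapply Rle_trans; [apply Cmod_ge_0|apply (H 0%nat)]).
  assert (Hsq : forall n, a n * a n + b n * b n <= T * T).
  { intro n. pose proof (Cmod2_alt (a n, b n)) as E. simpl in E.
    pose proof (Cmod_ge_0 (a n, b n)). pose proof (H n). nra. }
  pose proof (is_lim_seq_plus' _ _ _ _ (is_lim_seq_mult' _ _ _ _ Ha Ha)
                                 (is_lim_seq_mult' _ _ _ _ Hb Hb)) as Hl.
  pose proof (is_lim_seq_le _ _ _ _ Hsq Hl (is_lim_seq_const (T * T))) as Hle. simpl in Hle.
  pose proof (Cmod2_alt (x, y)) as E. simpl in E. pose proof (Cmod_ge_0 (x, y)).
  nra.
Qed.

Lemma Cmod_Clim_le (z : nat -> C) (T : R) :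
  Ccvg z -> (forall n, Cmod (z n) <= T) -> Cmod (Clim z) <= T.
Proof.
  intros Hz H. destruct (Ccvg_is_lim z Hz) as [Hre Him].
  apply (Cmod_le_lim _ _ _ _ _ Hre Him). intro n.
  change (Cmod (fst (z n), snd (z n)) <= T). rewrite <- surjective_pairing. apply H.
Qed.

Lemma Clim_minus (z w : nat -> C) :
  Ccvg z -> Ccvg w -> Clim (fun n => z n - w n)%C = (Clim z - Clim w)%C.
Proof.
  intros Hz Hw. destruct (Ccvg_is_lim z Hz) as [Hz1 Hz2], (Ccvg_is_lim w Hw) as [Hw1 Hw2].
  unfold Clim at 1.
  rewrite (is_lim_seq_unique (fun n => Re (z n - w n)%C) (Re (Clim z) - Re (Clim w)))
    by (apply is_lim_seq_minus'; assumption).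
  rewrite (is_lim_seq_unique (fun n => Im (z n - w n)%C) (Im (Clim z) - Im (Clim w)))
    by (apply is_lim_seq_minus'; assumption).
  reflexivity.
Qed.

Lemma Cmod_sub_Clim_le (z : nat -> C) (e : nat -> R) (n : nat) : Ccvg z ->
  (forall m, (n <= m)%nat -> Cmod (z m - z n)%C <= e n) -> Cmod (z n - Clim z)%C <= e n.
Proof.
  intros Hz H. destruct (Ccvg_is_lim z Hz) as [Hre Him].
  change (Cmod (Re (z n) - Re (Clim z), Im (z n) - Im (Clim z)) <= e n).
  apply (Cmod_le_lim (fun m => Re (z n) - Re (z (m + n)%nat))
                     (fun m => Im (z n) - Im (z (m + n)%nat))).
  - apply is_lim_seq_minus'; [apply is_lim_seq_const|].
    apply (is_lim_seq_incr_n (fun m => Re (z m))). exact Hre.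
  - apply is_lim_seq_minus'; [apply is_lim_seq_const|].
    apply (is_lim_seq_incr_n (fun m => Im (z m))). exact Him.
  - intro m. change (Cmod (z n - z (m + n)%nat)%C <= e n).
    rewrite <- Cmod_opp. replace (- (z n - z (m + n)%nat))%C with (z (m + n)%nat - z n)%C by ring.
    apply H. lia.
Qed.

Lemma geometric_increments_tail (z : nat -> C) (A r : R) : 0 <= r < 1 ->
  (forall n, Cmod (z (S n) - z n)%C <= A * r ^ n) ->
  forall n m, (n <= m)%nat -> Cmod (z m - z n)%C <= A / (1 - r) * r ^ n.
Proof.
  intros Hr H n m Hnm.
  assert (HA : 0 <= A)
    by (pose proof (Cmod_ge_0 (z 1%nat - z 0%nat)%C); pose proof (H 0%nat); simpl in *; lra).
  assert (Hpartial : forall p, Cmod (z (n + p)%nat - z n)%C <= A * r ^ n * (1 - r ^ p) / (1 - r)).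
  { induction p as [|p IH].
    - rewrite Nat.add_0_r. replace (z n - z n)%C with (RtoC 0) by ring. rewrite Cmod_0.
      simpl. unfold Rdiv. nra.
    - replace (z (n + S p)%nat - z n)%C
        with ((z (S (n + p)) - z (n + p)%nat) + (z (n + p)%nat - z n))%C
        by (rewrite Nat.add_succ_r; ring).
      eapply Rle_trans; [apply Cmod_triangle|].
      pose proof (H (n + p)%nat) as Hstep. rewrite pow_add in Hstep.
      apply Rle_trans with (A * (r ^ n * r ^ p) + A * r ^ n * (1 - r ^ p) / (1 - r)); [lra|].
      right. simpl. field. lra. }
  replace m with (n + (m - n))%nat by lia.
  eapply Rle_trans; [apply Hpartial|].
  pose proof (pow_le r n (proj1 Hr)). pose proof (pow_le r (m - n) (proj1 Hr)).
  assert (0 < / (1 - r)) by (apply Rinv_0_lt_compat; lra).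
  assert (0 <= A * r ^ n * / (1 - r)) by (apply Rmult_le_pos; [apply Rmult_le_pos|]; lra).
  unfold Rdiv. nra.
Qed.

Lemma Ccvg_geometric (z : nat -> C) (A r : R) : 0 <= r < 1 ->
  (forall n, Cmod (z (S n) - z n)%C <= A * r ^ n) ->
  Ccvg z /\ forall n, Cmod (z n - Clim z)%C <= A / (1 - r) * r ^ n.
Proof.
  intros Hr H. pose proof (geometric_increments_tail z A r Hr H) as Htail.
  assert (Hz : Ccvg z).
  { apply (Ccvg_modulus z (fun n => A / (1 - r) * r ^ n)); [exact Htail|].
    replace (Finite 0) with (Rbar_mult (A / (1 - r)) 0) by (simpl; f_equal; ring).
    apply is_lim_seq_scal_l, is_lim_seq_geom. rewrite Rabs_pos_eq; lra. }
  split; [exact Hz|]. intro n. apply (Cmod_sub_Clim_le z (fun n => A / (1 - r) * r ^ n)); auto.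
Qed.

Definition sumL {A} (f : A -> R) (l : list A) : R := fold_right (fun x acc => f x + acc) 0 l.
Definition sumC {A} (f : A -> C) (l : list A) : C :=
  fold_right (fun x acc => (f x + acc)%C) (RtoC 0) l.

Section ListSums.
Context {A : Type}.
Implicit Types (f g : A -> R) (l : list A).

Lemma sumL_app f l1 l2 : sumL f (l1 ++ l2) = sumL f l1 + sumL f l2.
Proof. induction l1 as [|x l1 IH]; simpl; [ring|rewrite IH; ring]. Qed.

Lemma sumL_ext_in f g l : (forall x, In x l -> f x = g x) -> sumL f l = sumL g l.
Proof. induction l as [|x l IH]; simpl; intros H; auto. rewrite H, IH; auto. Qed.

Lemma sumL_ext f g l : (forall x, f x = g x) -> sumL f l = sumL g l.
Proof. intros; apply sumL_ext_in; auto. Qed.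

Lemma sumL_plus f g l : sumL (fun x => f x + g x) l = sumL f l + sumL g l.
Proof. induction l as [|x l IH]; simpl; [ring|rewrite IH; ring]. Qed.

Lemma sumL_scal c f l : sumL (fun x => c * f x) l = c * sumL f l.
Proof. induction l as [|x l IH]; simpl; [ring|rewrite IH; ring]. Qed.

Lemma sumL_zero l : sumL (fun _ => 0) l = 0.
Proof. induction l as [|x l IH]; simpl; [ring|rewrite IH; ring]. Qed.

Lemma sumL_le f g l : (forall x, f x <= g x) -> sumL f l <= sumL g l.
Proof. intros H; induction l as [|x l IH]; simpl; [lra|]. specialize (H x); lra. Qed.

Lemma sumL_nonneg f l : (forall x, 0 <= f x) -> 0 <= sumL f l.
Proof. intros H. rewrite <- (sumL_zero l). apply sumL_le, H. Qed.

Lemma Rabs_sumL_le f l : Rabs (sumL f l) <= sumL (fun x => Rabs (f x)) l.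
Proof.
  induction l as [|x l IH]; simpl; [rewrite Rabs_R0; lra|].
  eapply Rle_trans; [apply Rabs_triang|lra].
Qed.

Lemma Re_sumC (h : A -> C) l : Re (sumC h l) = sumL (fun x => Re (h x)) l.
Proof. induction l as [|x l IH]; simpl; auto. rewrite <- IH. reflexivity. Qed.

Lemma Im_sumC (h : A -> C) l : Im (sumC h l) = sumL (fun x => Im (h x)) l.
Proof. induction l as [|x l IH]; simpl; auto. rewrite <- IH. reflexivity. Qed.

Lemma Cmod_sumC_le (h : A -> C) l : Cmod (sumC h l) <= sumL (fun x => Cmod (h x)) l.
Proof.
  induction l as [|x l IH]; simpl; [rewrite Cmod_0; lra|].
  eapply Rle_trans; [apply Cmod_triangle|lra].
Qed.

Lemma sumC_minus (h1 h2 : A -> C) l :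
  sumC (fun x => h1 x - h2 x)%C l = (sumC h1 l - sumC h2 l)%C.
Proof. induction l as [|x l IH]; simpl; [|rewrite IH]; ring. Qed.

Lemma sumL_flat_map {B} f (G : B -> list A) (l : list B) :
  sumL f (flat_map G l) = sumL (fun b => sumL f (G b)) l.
Proof. induction l as [|b l IH]; simpl; auto. rewrite sumL_app, IH; auto. Qed.

Lemma sumL_map {B} f (m : B -> A) (l : list B) : sumL f (map m l) = sumL (fun b => f (m b)) l.
Proof. induction l as [|b l IH]; simpl; auto. rewrite IH; auto. Qed.

End ListSums.

Lemma in_Zrange a N : In a (Zrange N) <-> (Z.abs a <= Z.of_nat N)%Z.
Proof.
  unfold Zrange. rewrite in_map_iff. split.
  - intros [i [<- Hi]]. apply in_seq in Hi. lia.
  - intros H. exists (Z.to_nat (a + Z.of_nat N)). split; [lia|]. apply in_seq. lia.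
Qed.

Lemma sumL_Zrange_succ (h : Z -> R) M :
  sumL h (Zrange (S M)) = h (- Z.of_nat (S M))%Z + sumL h (Zrange M) + h (Z.of_nat (S M)).
Proof.
  unfold Zrange. replace (2 * S M + 1)%nat with (S (S (2 * M + 1))) by lia.
  rewrite seq_S, map_app, sumL_app.
  change (seq 0 (S (2 * M + 1))) with (0%nat :: seq 1 (2 * M + 1)).
  rewrite <- seq_shift. cbn [map]. rewrite map_map. cbn [sumL fold_right].
  replace (Z.of_nat 0 - Z.of_nat (S M))%Z with (- Z.of_nat (S M))%Z by lia.
  replace (Z.of_nat (0 + S (2 * M + 1)) - Z.of_nat (S M))%Z with (Z.of_nat (S M)) by lia.
  rewrite (map_ext (fun x => (Z.of_nat (S x) - Z.of_nat (S M))%Z)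
                   (fun i => (Z.of_nat i - Z.of_nat M)%Z)) by lia.
  unfold sumL. ring.
Qed.

Lemma sumL_Zrange_restrict (h : Z -> R) N M : (N <= M)%nat ->
  sumL (fun a => if (Z.abs a <=? Z.of_nat N)%Z then h a else 0) (Zrange M) = sumL h (Zrange N).
Proof.
  intros HNM. induction M as [|M IH].
  - replace N with 0%nat by lia. apply sumL_ext_in. intros x Hx.
    apply in_Zrange in Hx. rewrite (proj2 (Z.leb_le _ _) Hx). reflexivity.
  - destruct (Nat.eq_dec N (S M)) as [->|HN].
    + apply sumL_ext_in. intros x Hx.
      apply in_Zrange in Hx. rewrite (proj2 (Z.leb_le _ _) Hx). reflexivity.
    + rewrite sumL_Zrange_succ, IH by lia.
      destruct (Z.leb_spec (Z.abs (- Z.of_nat (S M))) (Z.of_nat N)); [lia|].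
      destruct (Z.leb_spec (Z.abs (Z.of_nat (S M))) (Z.of_nat N)); [lia|]. ring.
Qed.

Lemma psumR_nested (f : Z3 -> R) N : psumR f N =
  sumL (fun a => sumL (fun b => sumL (fun c => f (a, b, c)) (Zrange N)) (Zrange N)) (Zrange N).
Proof.
  change (psumR f N) with (sumL f (cube N)). unfold cube.
  rewrite sumL_flat_map. apply sumL_ext; intro a.
  rewrite sumL_flat_map. apply sumL_ext; intro b. apply sumL_map.
Qed.

Definition in_box (N : nat) (j : Z3) : bool :=
  let '(a, b, c) := j in
  ((Z.abs a <=? Z.of_nat N)%Z && (Z.abs b <=? Z.of_nat N)%Z && (Z.abs c <=? Z.of_nat N)%Z)%bool.

Lemma psumR_restrict (f : Z3 -> R) N M : (N <= M)%nat ->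
  psumR (fun j => if in_box N j then f j else 0) M = psumR f N.
Proof.
  intros H. rewrite !psumR_nested. cbn [in_box].
  rewrite <- (sumL_Zrange_restrict _ N M H). apply sumL_ext; intro a.
  destruct (Z.abs a <=? Z.of_nat N)%Z; simpl.
  - rewrite <- (sumL_Zrange_restrict _ N M H). apply sumL_ext; intro b.
    destruct (Z.abs b <=? Z.of_nat N)%Z; simpl.
    + rewrite <- (sumL_Zrange_restrict _ N M H). reflexivity.
    + apply sumL_zero.
  - transitivity (sumL (fun _ : Z => 0) (Zrange M)); [|apply sumL_zero].
    apply sumL_ext; intro b. apply sumL_zero.
Qed.

Lemma psumR_split (f : Z3 -> R) N M : (N <= M)%nat ->
  psumR f M = psumR f N + psumR (fun j => if in_box N j then 0 else f j) M.
Proof.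
  intros H. rewrite <- (psumR_restrict f N M H).
  change (psumR ?g M) with (sumL g (cube M)). rewrite <- sumL_plus.
  apply sumL_ext; intro j. destruct (in_box N j); ring.
Qed.

Lemma psumR_increment_le (h g : Z3 -> R) N M : (forall j, Rabs (h j) <= g j) -> (N <= M)%nat ->
  Rabs (psumR h M - psumR h N) <= psumR g M - psumR g N.
Proof.
  intros Hg H. rewrite (psumR_split h N M H), (psumR_split g N M H).
  replace (psumR h N + _ - psumR h N)
    with (psumR (fun j => if in_box N j then 0 else h j) M) by ring.
  replace (psumR g N + _ - psumR g N)
    with (psumR (fun j => if in_box N j then 0 else g j) M) by ring.
  change (psumR ?f M) with (sumL f (cube M)).
  eapply Rle_trans; [apply Rabs_sumL_le|]. apply sumL_le; intro j.
  destruct (in_box N j); [rewrite Rabs_R0; lra|apply Hg].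
Qed.

Lemma psumR_dominated_cvg (h g : Z3 -> R) (T : R) :
  (forall j, Rabs (h j) <= g j) -> (forall N, psumR g N <= T) -> ex_finite_lim_seq (psumR h).
Proof.
  intros Hg HT. apply (ex_finite_lim_seq_dominated _ (psumR g)).
  - intros n m Hnm. apply psumR_increment_le; auto.
  - apply (ex_finite_lim_seq_incr _ T); [|exact HT]. intro n.
    pose proof (psumR_increment_le h g n (S n) Hg (Nat.le_succ_diag_r n)).
    pose proof (Rabs_pos (psumR h (S n) - psumR h n)). lra.
Qed.

Lemma Zseries_dominated (f : Z3 -> C) (g : Z3 -> R) (T : R) :
  (forall j, Cmod (f j) <= g j) -> (forall N, psumR g N <= T) ->
  Zseries_conv f /\ Cmod (Zsum f) <= T.
Proof.
  intros Hf HT.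
  assert (Hconv : Zseries_conv f).
  { split.
    - replace (fun N => Re (psumC f N)) with (psumR (fun j => Re (f j)))
        by (apply functional_extensionality; intro N; symmetry; apply Re_sumC).
      apply (psumR_dominated_cvg _ g T); auto.
      intro j. eapply Rle_trans; [apply re_le_Cmod|apply Hf].
    - replace (fun N => Im (psumC f N)) with (psumR (fun j => Im (f j)))
        by (apply functional_extensionality; intro N; symmetry; apply Im_sumC).
      apply (psumR_dominated_cvg _ g T); auto.
      intro j. eapply Rle_trans; [apply Im_le_Cmod|apply Hf]. }
  split; [exact Hconv|].
  apply (Cmod_Clim_le (psumC f)); [exact Hconv|]. intro N.
  eapply Rle_trans; [apply Cmod_sumC_le|]. eapply Rle_trans; [|apply (HT N)].
  apply sumL_le, Hf.
Qed.

Lemma Zsum_minus (f g : Z3 -> C) : Zseries_conv f -> Zseries_conv g ->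
  Zsum (fun j => f j - g j)%C = (Zsum f - Zsum g)%C.
Proof.
  intros Hf Hg. change (Zsum ?h) with (Clim (psumC h)).
  rewrite <- Clim_minus by assumption.
  f_equal. apply functional_extensionality; intro N. apply sumC_minus.
Qed.

Lemma neq_zero_of_Z3eqb_false j : Z3eqb j Z3zero = false -> j <> Z3zero.
Proof. intros H ->. discriminate. Qed.

Lemma Z3sub_neq_zero k j : Z3eqb j k = false -> Z3sub k j <> Z3zero.
Proof.
  intros H E. destruct j as [[a b] c], k as [[a' b'] c']; simpl in *. inversion E.
  replace a with a' in H by lia. replace b with b' in H by lia. replace c with c' in H by lia.
  rewrite !Z.eqb_refl in H. discriminate.
Qed.

Lemma IZR_sq_ge1 (z : Z) : z <> 0%Z -> 1 <= IZR z ^ 2.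
Proof.
  intros Hz. replace (IZR z ^ 2) with (IZR (z * z)) by (rewrite mult_IZR; ring).
  apply IZR_le. nia.
Qed.

Lemma knorm_ge1 k : k <> Z3zero -> 1 <= knorm k.
Proof.
  intros H. destruct k as [[a b] c]. unfold knorm, kx, ky, kz.
  rewrite <- sqrt_1. apply sqrt_le_1_alt.
  pose proof (pow2_ge_0 (IZR a)); pose proof (pow2_ge_0 (IZR b)); pose proof (pow2_ge_0 (IZR c)).
  destruct (Z.eq_dec a 0) as [->|Ha]; [destruct (Z.eq_dec b 0) as [->|Hb]|].
  - assert (Hc : c <> 0%Z) by (intros ->; apply H; reflexivity). pose proof (IZR_sq_ge1 c Hc). lra.
  - pose proof (IZR_sq_ge1 b Hb). lra.
  - pose proof (IZR_sq_ge1 a Ha). lra.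
Qed.

Lemma knorm_pos k : k <> Z3zero -> 0 < knorm k.
Proof. intros H; pose proof (knorm_ge1 k H); lra. Qed.

Lemma knorm_sq k : knorm k ^ 2 = dotR3 (Z3toR3 k) (Z3toR3 k).
Proof.
  unfold knorm. rewrite pow2_sqrt; [destruct k as [[a b] c]; simpl; ring|].
  pose proof (pow2_ge_0 (kx k)); pose proof (pow2_ge_0 (ky k)); pose proof (pow2_ge_0 (kz k)). lra.
Qed.

Lemma dotR3_sq_le (v w : R3) : dotR3 v w ^ 2 <= dotR3 v v * dotR3 w w.
Proof.
  destruct v as [[a1 a2] a3], w as [[b1 b2] b3]; simpl.
  assert (E : (a1 * a1 + a2 * a2 + a3 * a3) * (b1 * b1 + b2 * b2 + b3 * b3)
              - (a1 * b1 + a2 * b2 + a3 * b3) ^ 2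
            = (a1 * b2 - a2 * b1) ^ 2 + (a1 * b3 - a3 * b1) ^ 2 + (a2 * b3 - a3 * b2) ^ 2) by ring.
  pose proof (pow2_ge_0 (a1 * b2 - a2 * b1)); pose proof (pow2_ge_0 (a1 * b3 - a3 * b1));
    pose proof (pow2_ge_0 (a2 * b3 - a3 * b2)). lra.
Qed.

Lemma Rabs_dot_unit_le (j : Z3) (e : R3) : dotR3 e e = 1 -> Rabs (dotR3 (Z3toR3 j) e) <= knorm j.
Proof.
  intros He. pose proof (dotR3_sq_le (Z3toR3 j) e) as H. rewrite He, Rmult_1_r, <- knorm_sq in H.
  rewrite <- (Rabs_pos_eq (knorm j)) by (unfold knorm; apply sqrt_pos).
  apply Rsqr_le_abs_0. unfold Rsqr. nra.
Qed.

Definition axis_frame (e0 f0 : Z3 -> R3) : Prop :=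
  forall k, k <> Z3zero -> on_zaxis k = true ->
    dotR3 (e0 k) (e0 k) = 1 /\ dotR3 (f0 k) (f0 k) = 1 /\ dotR3 (e0 k) (f0 k) = 0 /\
    dotR3 (e0 k) (Z3toR3 k) = 0 /\ dotR3 (f0 k) (Z3toR3 k) = 0.

Lemma CH_unit e0 f0 m : axis_frame e0 f0 -> m <> Z3zero ->
  dotR3 (CH_e e0 m) (CH_e e0 m) = 1 /\ dotR3 (CH_f f0 m) (CH_f f0 m) = 1.
Proof.
  intros Hax Hm. unfold CH_e, CH_f. destruct (on_zaxis m) eqn:Ez.
  - destruct (Hax m Hm Ez) as [H1 [H2 _]]; auto.
  - assert (Hh : 0 < kx m ^ 2 + ky m ^ 2).
    { destruct m as [[a b] c]; simpl in Ez |- *.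
      pose proof (pow2_ge_0 (IZR a)); pose proof (pow2_ge_0 (IZR b)).
      apply Bool.andb_false_iff in Ez. rewrite !Z.eqb_neq in Ez.
      destruct Ez as [Hz|Hz]; pose proof (IZR_sq_ge1 _ Hz); lra. }
    pose proof (knorm_pos m Hm) as Hn.
    assert (Hkh : 0 < khnorm m) by (apply sqrt_lt_R0; auto).
    assert (E1 : khnorm m ^ 2 = kx m ^ 2 + ky m ^ 2) by (apply pow2_sqrt; lra).
    assert (E2 : knorm m ^ 2 = kx m ^ 2 + ky m ^ 2 + kz m ^ 2)
      by (apply pow2_sqrt; pose proof (pow2_ge_0 (kz m)); lra).
    set (X := kx m) in *. set (Y := ky m) in *. set (Z := kz m) in *.
    set (h := khnorm m) in *. set (n := knorm m) in *.
    simpl. split.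
    + transitivity ((X ^ 2 + Y ^ 2) / h ^ 2); [field; lra|].
      rewrite <- E1. field. lra.
    + transitivity (((X ^ 2 + Y ^ 2) * Z ^ 2 + h ^ 2 * h ^ 2) / (n ^ 2 * h ^ 2)); [field; lra|].
      rewrite <- E1.
      replace (n ^ 2) with (h ^ 2 + Z ^ 2) by lra. field. split; nra.
Qed.

Lemma dotZC_vel U beta e0 f0 V W m j :
  dotZC j (vel U beta e0 f0 V W m) =
  (RtoC (Rpower (knorm m) beta * U) *
   (RtoC (dotR3 (Z3toR3 j) (CH_e e0 m)) * V m + RtoC (dotR3 (Z3toR3 j) (CH_f f0 m)) * W m))%C.
Proof.
  unfold vel. destruct (CH_e e0 m) as [[e1 e2] e3], (CH_f f0 m) as [[f1 f2] f3].
  unfold dotZC. simpl dotR3. rewrite !RtoC_plus, !RtoC_mult. ring.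
Qed.

Lemma Cmod_dotZC_vel_le U beta e0 f0 V W Xi : 0 <= U -> axis_frame e0 f0 ->
  (forall m, m <> Z3zero -> Cmod (V m) <= Xi /\ Cmod (W m) <= Xi) ->
  forall m j, m <> Z3zero ->
  Cmod (dotZC j (vel U beta e0 f0 V W m)) <= 2 * U * Xi * Rpower (knorm m) beta * knorm j.
Proof.
  intros HU Hax HVW m j Hm. destruct (HVW m Hm) as [HV HW].
  rewrite dotZC_vel, Cmod_mult, Cmod_R.
  destruct (CH_unit e0 f0 m Hax Hm) as [Ue Uf].
  pose proof (Rabs_dot_unit_le j _ Ue) as De. pose proof (Rabs_dot_unit_le j _ Uf) as Df.
  assert (Hp : 0 < Rpower (knorm m) beta) by apply exp_pos.
  assert (0 <= Xi) by (eapply Rle_trans; [apply Cmod_ge_0|apply HV]).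
  rewrite Rabs_pos_eq by nra.
  assert (Hsum : Cmod (RtoC (dotR3 (Z3toR3 j) (CH_e e0 m)) * V m
                       + RtoC (dotR3 (Z3toR3 j) (CH_f f0 m)) * W m)%C <= 2 * Xi * knorm j).
  { eapply Rle_trans; [apply Cmod_triangle|]. rewrite !Cmod_mult, !Cmod_R.
    pose proof (Cmod_ge_0 (V m)); pose proof (Cmod_ge_0 (W m)).
    pose proof (Rabs_pos (dotR3 (Z3toR3 j) (CH_e e0 m))).
    pose proof (Rabs_pos (dotR3 (Z3toR3 j) (CH_f f0 m))). nra. }
  replace (2 * U * Xi * Rpower (knorm m) beta * knorm j)
    with (Rpower (knorm m) beta * U * (2 * Xi * knorm j)) by ring.
  apply Rmult_le_compat_l; [nra|exact Hsum].
Qed.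

Definition weight (kappa beta : R) (k : Z3) : R := / knorm k ^ 2 * Kbeta kappa beta (knorm k).

Definition weighted_bound (kappa beta B : R) (theta : Z3 -> C) : Prop :=
  forall j, j <> Z3zero -> Cmod (theta j) <= B * weight kappa beta j.

Lemma Kbeta_pos kappa beta s : 0 < Kbeta kappa beta s.
Proof. unfold Kbeta. apply Rmin_pos; [lra|apply exp_pos]. Qed.

Lemma weight_pos kappa beta k : k <> Z3zero -> 0 < weight kappa beta k.
Proof.
  intros Hk. apply Rmult_lt_0_compat; [|apply Kbeta_pos].
  apply Rinv_0_lt_compat, pow_lt, knorm_pos, Hk.
Qed.

Lemma Rpower_le_weight kappa alpha beta s : 1 <= s -> 1 <= 2 * kappa -> beta <= 0 ->
  alpha <= beta - 2 -> Rpower s alpha <= / s ^ 2 * Kbeta kappa beta s.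
Proof.
  intros Hs Hk Hb Ha.
  eapply Rle_trans; [apply Rle_Rpower; eauto|].
  unfold Rminus. rewrite Rpower_plus.
  replace (- (2)) with (- INR 2) by (simpl; ring). rewrite Rpower_Ropp, Rpower_pow by lra.
  rewrite Rmult_comm. apply Rmult_le_compat_l; [left; apply Rinv_0_lt_compat; nra|].
  apply Rmin_glb.
  - rewrite <- (Rpower_O s) by lra. apply Rle_Rpower; lra.
  - replace s with (s / (2 * kappa) * (2 * kappa)) at 1 by (field; lra).
    rewrite <- Rpower_mult_distr by (try apply Rdiv_lt_0_compat; lra).
    assert (0 < Rpower (s / (2 * kappa)) beta) by apply exp_pos.
    assert (Rpower (2 * kappa) beta <= 1)
      by (rewrite <- (Rpower_O (2 * kappa)) by lra; apply Rle_Rpower; lra).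
    nra.
Qed.

Lemma Rle_fold_max {A} (f : A -> R) l x : In x l -> f x <= fold_right Rmax 0 (map f l).
Proof.
  induction l as [|y l IH]; simpl; [tauto|]. intros [->|H]; [apply Rmax_l|].
  eapply Rle_trans; [apply IH, H|apply Rmax_r].
Qed.

Lemma in_cube_of_knorm_lt (r : R) (j : Z3) : knorm j < r -> In j (cube (Z.to_nat (up r))).
Proof.
  intros Hj. destruct j as [[a b] c].
  assert (Hcoord : forall z, Rabs (IZR z) <= knorm (a, b, c) ->
                            (Z.abs z <= Z.of_nat (Z.to_nat (up r)))%Z).
  { intros z Hz. rewrite <- abs_IZR in Hz. destruct (archimed r) as [Hup _].
    assert (Z.abs z < up r)%Z by (apply lt_IZR; lra). lia. }
  assert (Hcomp : Rabs (IZR a) <= knorm (a, b, c) /\ Rabs (IZR b) <= knorm (a, b, c) /\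
                  Rabs (IZR c) <= knorm (a, b, c)).
  { unfold knorm, kx, ky, kz.
    pose proof (pow2_ge_0 (IZR a)); pose proof (pow2_ge_0 (IZR b)); pose proof (pow2_ge_0 (IZR c)).
    repeat split; rewrite <- sqrt_Rsqr_abs; apply sqrt_le_1_alt; unfold Rsqr; nra. }
  destruct Hcomp as [Ha [Hb Hc]].
  unfold cube. apply in_flat_map. exists a. split; [apply in_Zrange; auto|].
  apply in_flat_map. exists b. split; [apply in_Zrange; auto|].
  apply in_map_iff. exists c. split; [reflexivity|apply in_Zrange; auto].
Qed.

Lemma bounded_on_ball (f : Z3 -> R) (r : R) : exists M, forall j, knorm j < r -> f j <= M.
Proof.
  exists (fold_right Rmax 0 (map f (cube (Z.to_nat (up r))))). intros j Hj.
  apply Rle_fold_max, in_cube_of_knorm_lt, Hj.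
Qed.

Lemma gamma_weighted_bound (gamma : Z3 -> C) cg kappa alpha beta :
  0 <= cg -> 1 <= 2 * kappa -> beta <= 0 -> alpha <= beta - 2 ->
  (forall k, k <> Z3zero -> kappa <= knorm k -> Cmod (gamma k) <= cg * Rpower (knorm k) alpha) ->
  exists C0, 0 <= C0 /\ weighted_bound kappa beta C0 gamma.
Proof.
  intros Hcg Hk Hb Ha Hg.
  destruct (bounded_on_ball (fun j => Cmod (gamma j) / weight kappa beta j) kappa) as [M HM].
  exists (cg + Rmax M 0). split; [pose proof (Rmax_r M 0); lra|]. intros j Hj.
  pose proof (weight_pos kappa beta j Hj) as Hw. pose proof (Rmax_l M 0). pose proof (Rmax_r M 0).
  destruct (Rlt_le_dec (knorm j) kappa) as [Hs|Hs].
  - specialize (HM j Hs). unfold Rdiv in HM.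
    apply Rmult_le_compat_r with (r := weight kappa beta j) in HM; [|lra].
    rewrite Rmult_assoc, Rinv_l, Rmult_1_r in HM by lra. nra.
  - eapply Rle_trans; [apply Hg; auto|].
    pose proof (Rpower_le_weight kappa alpha beta (knorm j) (knorm_ge1 j Hj) Hk Hb Ha).
    fold (weight kappa beta j) in *. nra.
Qed.

Lemma varpi_term_nonneg kappa beta k j : 0 <= varpi_term kappa beta k j.
Proof.
  unfold varpi_term. destruct (Z3eqb j Z3zero || Z3eqb j k)%bool eqn:E; [lra|].
  apply Bool.orb_false_iff in E as [Hj _]. apply neq_zero_of_Z3eqb_false in Hj.
  pose proof (knorm_pos j Hj). pose proof (Kbeta_pos kappa beta (knorm j)).
  pose proof (exp_pos (beta * ln (knorm (Z3sub k j)))).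
  unfold Rpower. apply Rmult_le_pos; [apply Rmult_le_pos|]; try lra.
  left; apply Rinv_0_lt_compat; lra.
Qed.

Lemma varpi_partial_sum_le kappa beta k N : k <> Z3zero ->
  Rbar_le (/ Kbeta kappa beta (knorm k) * psumR (varpi_term kappa beta k) N) (varpi kappa beta).
Proof. intros Hk. apply (proj1 (Lub_Rbar_correct _)). exists k, N. auto. Qed.

Lemma varpi_contraction kappa beta a : 0 <= a ->
  Rbar_lt (Rbar_mult (Finite a) (varpi kappa beta)) (Finite 1) ->
  0 <= real (varpi kappa beta) /\ a * real (varpi kappa beta) < 1 /\
  forall k N, k <> Z3zero ->
    a * psumR (varpi_term kappa beta k) N
      <= a * real (varpi kappa beta) * Kbeta kappa beta (knorm k).
Proof.
  intros Ha Hlt.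
  assert (Hnn : forall k N, 0 <= / Kbeta kappa beta (knorm k) * psumR (varpi_term kappa beta k) N).
  { intros k N. apply Rmult_le_pos; [left; apply Rinv_0_lt_compat, Kbeta_pos|].
    apply sumL_nonneg, varpi_term_nonneg. }
  assert (Hk1 : ((1%Z, 0%Z, 0%Z) : Z3) <> Z3zero) by discriminate.
  pose proof (varpi_partial_sum_le kappa beta _ 0%nat Hk1) as H0.
  pose proof (Hnn ((1%Z, 0%Z, 0%Z) : Z3) 0%nat).
  pose proof (varpi_partial_sum_le kappa beta) as Hub.
  destruct (varpi kappa beta) as [v| |]; simpl in H0, Hub, Hlt |- *.
  - split; [lra|]. split; [exact Hlt|]. intros k N Hk. specialize (Hub k N Hk).
    pose proof (Kbeta_pos kappa beta (knorm k)) as HK.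
    assert (psumR (varpi_term kappa beta k) N <= v * Kbeta kappa beta (knorm k)).
    { apply Rmult_le_compat_r with (r := Kbeta kappa beta (knorm k)) in Hub; [|lra].
      rewrite Rmult_comm, <- Rmult_assoc, Rinv_r, Rmult_1_l in Hub by lra. exact Hub. }
    rewrite Rmult_assoc. apply Rmult_le_compat_l; assumption.
  - (* a * (+oo) < 1 forces a = 0, and real (+oo) = 0 makes every claim trivial. *)
    assert (Ea : a = 0).
    { destruct (Rle_dec 0 a) as [Hle|]; [|lra].
      destruct (Rle_lt_or_eq_dec 0 a Hle); simpl in Hlt; [contradiction|auto]. }
    subst a. repeat split; [lra|lra|]. intros. lra.
  - contradiction.
Qed.

Definition inv_lap_adv (u : Z3 -> C3) (theta : Z3 -> C) (k : Z3) : C :=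
  (RtoC (- / knorm k ^ 2) * adv u theta k)%C.

Lemma iterate_S u gamma n k :
  iterate u gamma (S n) k = (inv_lap_adv u (iterate u gamma n) k - gamma k)%C.
Proof. reflexivity. Qed.

Lemma adv_minus u (ta tb : Z3 -> C) k :
  Zseries_conv (adv_term u ta k) -> Zseries_conv (adv_term u tb k) ->
  (adv u ta k - adv u tb k)%C = adv u (fun j => ta j - tb j)%C k.
Proof.
  intros Ha Hb. unfold adv. rewrite <- Zsum_minus by assumption. f_equal.
  apply functional_extensionality. intro j. unfold adv_term.
  destruct (Z3eqb j Z3zero || Z3eqb j k)%bool; ring.
Qed.

Section Contraction.

Variables (kappa beta a rho : R) (u : Z3 -> C3).
Hypothesis Hu : forall m j, m <> Z3zero ->
  Cmod (dotZC j (u m)) <= a * Rpower (knorm m) beta * knorm j.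
Hypothesis Hvarpi : forall k N, k <> Z3zero ->
  a * psumR (varpi_term kappa beta k) N <= rho * Kbeta kappa beta (knorm k).
Hypothesis Hrho : 0 <= rho.

Lemma Cmod_adv_term_le (theta : Z3 -> C) B k j : weighted_bound kappa beta B theta ->
  Cmod (adv_term u theta k j) <= B * a * varpi_term kappa beta k j.
Proof.
  intros Hth. unfold adv_term, varpi_term.
  destruct (Z3eqb j Z3zero || Z3eqb j k)%bool eqn:E; [rewrite Cmod_0; lra|].
  apply Bool.orb_false_iff in E as [Hj Hjk]. apply neq_zero_of_Z3eqb_false in Hj.
  pose proof (Hu (Z3sub k j) j (Z3sub_neq_zero k j Hjk)) as Hv.
  pose proof (Hth j Hj) as Ht. unfold weight in Ht.
  pose proof (knorm_pos j Hj). pose proof (Kbeta_pos kappa beta (knorm j)).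
  rewrite !Cmod_mult.
  replace (Cmod Defs.Ci) with 1
    by (unfold Cmod, Defs.Ci; simpl; rewrite <- sqrt_1 at 1; f_equal; ring).
  rewrite Rmult_1_l.
  eapply Rle_trans; [apply Rmult_le_compat; try apply Cmod_ge_0; [exact Hv|exact Ht]|].
  right. field. lra.
Qed.

Lemma adv_weighted_bound (theta : Z3 -> C) B k : 0 <= B -> weighted_bound kappa beta B theta ->
  k <> Z3zero ->
  Zseries_conv (adv_term u theta k) /\ Cmod (adv u theta k) <= B * rho * Kbeta kappa beta (knorm k).
Proof.
  intros HB Hth Hk.
  apply (Zseries_dominated _ (fun j => B * a * varpi_term kappa beta k j)).
  - intro j. apply Cmod_adv_term_le, Hth.
  - intro N. change (psumR ?f N) with (sumL f (cube N)).
    rewrite (sumL_ext _ (fun j => B * (a * varpi_term kappa beta k j))) by (intro; ring).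
    rewrite !sumL_scal, Rmult_assoc. apply Rmult_le_compat_l; [exact HB|apply Hvarpi, Hk].
Qed.

Lemma inv_lap_adv_weighted_bound (theta : Z3 -> C) B : 0 <= B ->
  weighted_bound kappa beta B theta -> weighted_bound kappa beta (B * rho) (inv_lap_adv u theta).
Proof.
  intros HB Hth k Hk. destruct (adv_weighted_bound theta B k HB Hth Hk) as [_ Hadv].
  unfold inv_lap_adv, weight. rewrite Cmod_mult, Cmod_R, Rabs_Ropp.
  pose proof (pow_lt _ 2 (knorm_pos k Hk)).
  rewrite Rabs_pos_eq by (left; apply Rinv_0_lt_compat; lra).
  replace (B * rho * (/ knorm k ^ 2 * Kbeta kappa beta (knorm k)))
    with (/ knorm k ^ 2 * (B * rho * Kbeta kappa beta (knorm k))) by ring.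
  apply Rmult_le_compat_l; [left; apply Rinv_0_lt_compat; lra|exact Hadv].
Qed.

Variables (C0 : R) (gamma : Z3 -> C).
Hypothesis HC0 : 0 <= C0.
Hypothesis Hgamma : weighted_bound kappa beta C0 gamma.

Lemma iterate_weighted_bound n :
  exists B, 0 <= B /\ weighted_bound kappa beta B (iterate u gamma n).
Proof.
  induction n as [|n [B [HB IH]]].
  - exists C0. split; [exact HC0|]. intros j Hj. simpl. rewrite Cmod_opp. apply Hgamma, Hj.
  - exists (B * rho + C0). split; [nra|]. intros j Hj. rewrite iterate_S.
    eapply Rle_trans; [apply Cmod_triangle|]. rewrite Cmod_opp.
    pose proof (inv_lap_adv_weighted_bound _ B HB IH j Hj). pose proof (Hgamma j Hj). lra.
Qed.

Lemma iterate_adv_conv n k : k <> Z3zero -> Zseries_conv (adv_term u (iterate u gamma n) k).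
Proof.
  intros Hk. destruct (iterate_weighted_bound n) as [B [HB Hth]].
  exact (proj1 (adv_weighted_bound _ B k HB Hth Hk)).
Qed.

Lemma iterate_increment_bound n :
  weighted_bound kappa beta (C0 * rho ^ S n)
    (fun k => iterate u gamma (S n) k - iterate u gamma n k)%C.
Proof.
  induction n as [|n IH]; intros k Hk.
  - replace (iterate u gamma 1 k - iterate u gamma 0 k)%C with (inv_lap_adv u (iterate u gamma 0) k)
      by (rewrite iterate_S; simpl; ring).
    rewrite pow_1. apply inv_lap_adv_weighted_bound; [exact HC0| |exact Hk].
    intros j Hj. simpl. rewrite Cmod_opp. apply Hgamma, Hj.
  - replace (iterate u gamma (S (S n)) k - iterate u gamma (S n) k)%C
      with (inv_lap_adv u (fun j => iterate u gamma (S n) j - iterate u gamma n j)%C k).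
    + replace (C0 * rho ^ S (S n)) with (C0 * rho ^ S n * rho) by (simpl; ring).
      apply inv_lap_adv_weighted_bound; [|exact IH|exact Hk].
      apply Rmult_le_pos; [exact HC0|apply pow_le, Hrho].
    + rewrite !iterate_S. unfold inv_lap_adv.
      rewrite <- adv_minus by (apply iterate_adv_conv, Hk). ring.
Qed.

Lemma iterate_geometric_cvg k : rho < 1 -> k <> Z3zero ->
  Ccvg (fun n => iterate u gamma n k) /\
  forall n, Cmod (iterate u gamma n k - Clim (fun n => iterate u gamma n k))%C
            <= C0 * rho * weight kappa beta k / (1 - rho) * rho ^ n.
Proof.
  intros Hrho1 Hk. apply Ccvg_geometric; [lra|]. intro n.
  replace (C0 * rho * weight kappa beta k * rho ^ n) with (C0 * rho ^ S n * weight kappa beta k)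
    by (simpl; ring).
  exact (iterate_increment_bound n k Hk).
Qed.

End Contraction.

Lemma geometric_tail_le_twice (X r : R) : 0 <= X -> 0 <= r <= 1 / 2 ->
  X / (1 - r) * r ^ 1 <= X * 2 * r.
Proof.
  intros HX Hr. assert (Hinv : / (1 - r) <= 2).
  { apply Rmult_le_reg_l with (1 - r); [lra|]. rewrite Rinv_r by lra. lra. }
  rewrite pow_1. unfold Rdiv. apply Rmult_le_compat_r; [lra|]. nra.
Qed.

Theorem mainTheorem7 (gamma : Z3 -> C) (cg kappa alpha beta : R) :
  (forall k, gamma (Z3opp k) = Cconj (gamma k)) ->
  0 <= cg -> 16 <= kappa -> beta < -2 -> alpha <= 2 * Rmin beta (-3) - 1 ->
  (forall k, k <> Z3zero -> kappa <= knorm k ->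
     Cmod (gamma k) <= cg * Rpower (knorm k) alpha) ->
  exists c1 : R,
  forall (U Xi : R) (V W : Z3 -> C) (e0 f0 : Z3 -> R3),
    0 <= U ->
    (forall k, V (Z3opp k) = Cconj (V k)) ->
    (forall k, W (Z3opp k) = Cconj (W k)) ->
    (forall k, k <> Z3zero -> Cmod (V k) <= Xi /\ Cmod (W k) <= Xi) ->
    (forall k, k <> Z3zero -> on_zaxis k = true ->
       dotR3 (e0 k) (e0 k) = 1 /\ dotR3 (f0 k) (f0 k) = 1 /\ dotR3 (e0 k) (f0 k) = 0 /\
       dotR3 (e0 k) (Z3toR3 k) = 0 /\ dotR3 (f0 k) (Z3toR3 k) = 0) ->
    Rbar_lt (Rbar_mult (Finite (4 * U * Xi)) (varpi kappa beta)) (Finite 1) ->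
    let u := vel U beta e0 f0 V W in
    let theta := iterate u gamma in
    let eps := 4 * U * Xi * real (varpi kappa beta) in
    (forall n k, k <> Z3zero -> Zseries_conv (adv_term u (theta n) k)) /\
    exists theta_inf : Z3 -> C,
      (forall k, k <> Z3zero ->
         is_lim_seq (fun n => Re (theta n k)) (Re (theta_inf k)) /\
         is_lim_seq (fun n => Im (theta n k)) (Im (theta_inf k))) /\
      (forall k, k <> Z3zero ->
         Cmod (theta 1%nat k - theta_inf k)%C
           <= c1 * U * Xi * eps * / (knorm k ^ 2) * Kbeta kappa beta (knorm k)).
Proof.
  intros _ Hcg Hkappa Hbeta Halpha Hgamma.
  assert (Halpha' : alpha <= beta - 2) by (pose proof (Rmin_l beta (-3)); lra).
  destruct (gamma_weighted_bound gamma cg kappa alpha beta Hcg ltac:(lra) ltac:(lra) Halpha' Hgamma)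
    as [C0 [HC0 Hg]].
  exists (2 * C0 * real (varpi kappa beta)).
  intros U Xi V W e0 f0 HU _ _ HVW Hframe Hlt u theta eps.
  assert (HXi : 0 <= Xi).
  { assert (Hk1 : ((1%Z, 0%Z, 0%Z) : Z3) <> Z3zero) by discriminate.
    destruct (HVW _ Hk1) as [HV _]. eapply Rle_trans; [apply Cmod_ge_0|exact HV]. }
  destruct (varpi_contraction kappa beta (4 * U * Xi) ltac:(nra) Hlt) as [Hvp [Hsmall Hvarpi]].
  set (vp := real (varpi kappa beta)) in *.
  set (rho := 2 * U * Xi * vp).
  assert (Hrho : 0 <= rho <= 1 / 2) by (unfold rho; split; [repeat apply Rmult_le_pos|]; lra).
  pose proof (Cmod_dotZC_vel_le U beta e0 f0 V W Xi HU Hframe HVW) as Hu.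
  assert (Hvarpi' : forall k N, k <> Z3zero ->
            2 * U * Xi * psumR (varpi_term kappa beta k) N <= rho * Kbeta kappa beta (knorm k))
    by (intros k N Hk; specialize (Hvarpi k N Hk); unfold rho; lra).
  pose proof (iterate_geometric_cvg _ _ _ _ _ Hu Hvarpi' (proj1 Hrho) _ _ HC0 Hg) as Hgeo.
  split; [exact (iterate_adv_conv _ _ _ _ _ Hu Hvarpi' (proj1 Hrho) _ _ HC0 Hg)|].
  exists (fun k => Clim (fun n => theta n k)). split.
  - intros k Hk. exact (Ccvg_is_lim _ (proj1 (Hgeo k ltac:(lra) Hk))).
  - intros k Hk. eapply Rle_trans; [apply (proj2 (Hgeo k ltac:(lra) Hk) 1%nat)|].
    replace (2 * C0 * vp * U * Xi * eps * / knorm k ^ 2 * Kbeta kappa beta (knorm k))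
      with (C0 * rho * weight kappa beta k * 2 * rho) by (unfold eps, rho, weight; ring).
    pose proof (weight_pos kappa beta k Hk).
    apply geometric_tail_le_twice; [apply Rmult_le_pos; [apply Rmult_le_pos|]; lra|exact Hrho].
Qed.
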